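(* Let $r\geq 3$ and let $D$ be an $m$-colored semicomplete $r$-partite digraph such that every directed $3$-cycle $\overrightarrow{C}_3$ and every directed $4$-cycle $\overrightarrow{C}_4$ contained in $D$ (as a subdigraph) is monochromatic. Let $x,y$ be distinct vertices of $D$. If there exists a directed path from $x$ to $y$ using exactly $2$ colors and there is no directed path from $y$ to $x$ using at most $2$ colors, then $d(x,y)\leq 2$.
   Context: A semicomplete $r$-partite digraph ($r\ge 2$) is a digraph whose vertex set is partitioned into $r$ nonempty independent sets (partite sets) such that for any two vertices $u,v$ in different partite sets at least one of the arcs $(u,v)$, $(v,u)$ is present (both may be present); there are no arcs inside a partite set. An $m$-colored digraph is a digraph whose arcs are each assigned one of $m$ colors. A directed path (no repeated vertices) is $j$-colored if its arcs use exactly $j$ distinct colors; it uses at most $k$ colors if it is $j$-colored for some $1\le j\le k$. A subdigraph is monochromatic if all its arcs have the same color. $\overrightarrow{C}_n$ is the directed cycle of length $n$. $d(x,y)$ denotes the minimum number of arcs of a directed path from $x$ to $y$. *)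

From mathcomp Require Import all_boot.
Set Implicit Arguments. Unset Strict Implicit. Unset Printing Implicit Defensive.

Definition semicomplete_multipartite (V : finType) (r : nat)
  (arc : rel V) (part : V -> 'I_r) : Prop :=
  [/\ (forall i : 'I_r, exists v : V, part v = i),
      (forall u v, arc u v -> part u != part v) &
      (forall u v, part u != part v -> arc u v || arc v u)].

(* An m-coloring: each arc (u,v) gets color [col u v] in {0,...,m-1}
   (values of col on non-arcs are irrelevant). *)
Definition m_colored (V : finType) (m : nat) (arc : rel V) (col : V -> V -> nat) : Prop :=
  forall u v, arc u v -> col u v < m.

Definition dipath (V : finType) (arc : rel V) (x : V) (p : seq V) (y : V) : Prop :=
  [/\ path arc x p, uniq (x :: p) & last x p = y].

Definition ncolors (V : finType) (col : V -> V -> nat) (x : V) (p : seq V) : nat :=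
  size (undup (pairmap col x p)).

Definition C3_mono (V : finType) (arc : rel V) (col : V -> V -> nat) : Prop :=
  forall a b c : V, uniq [:: a; b; c] ->
    arc a b -> arc b c -> arc c a ->
    col a b = col b c /\ col b c = col c a.

Definition C4_mono (V : finType) (arc : rel V) (col : V -> V -> nat) : Prop :=
  forall a b c d : V, uniq [:: a; b; c; d] ->
    arc a b -> arc b c -> arc c d -> arc d a ->
    [/\ col a b = col b c, col b c = col c d & col c d = col d a].

Definition dist_le (V : finType) (arc : rel V) (x y : V) (k : nat) : Prop :=
  exists p : seq V, dipath arc x p y /\ size p <= k.

From Stdlib Require Import Classical.
From mathcomp Require Import all_boot.

(* Suppose d(x,y) > 2 and no path from y to x uses at most two
   colors.  Then there is no arc x->y, no path x->z->y, no arc y->x and no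
   path y->z->x; hence x and y lie in the same partite set, and every vertex z
   outside that set is either an OUT-vertex (x->z and y->z) or an IN-vertex
   (z->x and z->y).  An arc from an out-vertex u to an in-vertex v would give
   the 3-cycles x u v and y u v; by C3-monochromaticity the path y u v x is
   monochromatic, a contradiction.  Likewise a path u v w from an out-vertex u
   through a vertex v of the part of x to an in-vertex w gives monochromatic
   4-cycles and the monochromatic path y u v w x.  Consequently the "safe"
   vertices (out-vertices, and vertices of the part of x other than x, y that
   are entered from an out-vertex) are closed under arcs and differ from y.
   The first vertex after x on any x-y path is an out-vertex, so no x-y path
   exists at all: contradiction.  (The argument does not need r >= 3, the
   bound m on colors, nor that the given x-y path has exactly two colors.)
   The section below first proves counting facts about colors and short
   paths, then the argument above; the theorem is derived last. *)

Section FarPair.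

Set Implicit Arguments.
Unset Strict Implicit.

Variables (V : finType) (r : nat) (arc : rel V) (part : V -> 'I_r).
Variable col : V -> V -> nat.

Lemma ncolors_gt0 (x : V) (p : seq V) :
  p != [::] -> 0 < ncolors col x p.
Proof.
case: p => [|v p] // _.
have : col x v \in undup (pairmap col x (v :: p)) by rewrite mem_undup inE eqxx.
by rewrite /ncolors; case: (undup _).
Qed.

Lemma ncolors_short (x : V) (p : seq V) :
  0 < size p <= 2 -> 1 <= ncolors col x p <= 2.
Proof.
case/andP=> p_gt0 p_le2; rewrite ncolors_gt0 -?size_eq0 -?lt0n //=.
by rewrite (leq_trans (size_undup _)) // size_pairmap.
Qed.

Lemma ncolors_mono (x : V) (p : seq V) (c : nat) :
  p != [::] -> all (pred1 c) (pairmap col x p) -> ncolors col x p = 1.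
Proof.
move=> p_nil /allP mono_c; apply/eqP; rewrite eqn_leq ncolors_gt0 // andbT /ncolors.
have := @uniq_leq_size _ _ [:: c] (undup_uniq (pairmap col x p)); apply => d.
by rewrite mem_undup => /mono_c /eqP ->; rewrite mem_head.
Qed.

Hypothesis arc_parts : forall u v, arc u v -> part u != part v.
Hypothesis arc_between : forall u v, part u != part v -> arc u v || arc v u.
Hypothesis C3 : C3_mono arc col.
Hypothesis C4 : C4_mono arc col.

Lemma arc_neq u v : arc u v -> u != v.
Proof. by move/arc_parts; apply: contraNneq => ->. Qed.

Ltac distinct :=
  rewrite /= !inE !negb_or; repeat (apply/andP; split); by [|rewrite eq_sym].

Lemma dipath_arc u v : arc u v -> dipath arc u [:: v] v.
Proof. by move=> uv; split; rewrite /= ?uv ?inE ?arc_neq. Qed.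

Lemma dipath_arc2 u z v :
  arc u z -> arc z v -> u != v -> dipath arc u [:: z; v] v.
Proof.
move=> uz zv neq_uv; have uz' := arc_neq uz; have zv' := arc_neq zv.
by split; [rewrite /= uz zv | distinct |].
Qed.

Variables x y : V.
Hypothesis neq_xy : x != y.
Hypothesis far : ~ dist_le arc x y 2.
Hypothesis no_back : ~ exists q, dipath arc y q x /\ 1 <= ncolors col y q <= 2.

Lemma no_arc_xy : ~~ arc x y.
Proof. by apply/negP => xy; apply: far; exists [:: y]; split; [apply: dipath_arc|]. Qed.

Lemma no_path2_xy z : ~~ (arc x z && arc z y).
Proof.
apply/negP => /andP[xz zy]; apply: far.
by exists [:: z; y]; split; [apply: dipath_arc2|].
Qed.

Lemma no_arc_yx : ~~ arc y x.
Proof.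
apply/negP => yx; apply: no_back.
by exists [:: x]; split; [apply: dipath_arc | apply: ncolors_short].
Qed.

Lemma no_path2_yx z : ~~ (arc y z && arc z x).
Proof.
apply/negP => /andP[yz zx]; apply: no_back.
exists [:: z; x]; split; last exact: ncolors_short.
by apply: dipath_arc2; rewrite // eq_sym.
Qed.

Lemma no_mono_path_yx q c :
  dipath arc y q x -> q != [::] -> all (pred1 c) (pairmap col y q) -> False.
Proof.
by move=> yqx q_nil mono; apply: no_back; exists q; rewrite (ncolors_mono q_nil mono).
Qed.

Lemma same_part_xy : part x = part y.
Proof.
apply/eqP; apply: contraT => /arc_between.
by rewrite (negPf no_arc_xy) (negPf no_arc_yx).
Qed.

Definition out_vertex z := arc x z && arc y z.
Definition in_vertex z := arc z x && arc z y.

Lemma out_or_in z : part z != part x -> out_vertex z || in_vertex z.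
Proof.
move=> zx; have := arc_between zx; rewrite same_part_xy in zx.
have := arc_between zx; move: (no_path2_xy z) (no_path2_yx z).
rewrite /out_vertex /in_vertex.
by case: (arc x z); case: (arc z x); case: (arc y z); case: (arc z y).
Qed.

(* No arc from an out-vertex to an in-vertex: it would close two 3-cycles
   making the path y u v x monochromatic. *)
Lemma out_in_no_arc u v : out_vertex u -> in_vertex v -> ~~ arc u v.
Proof.
case/andP=> xu yu /andP[vx vy]; apply/negP => uv.
have xu' := arc_neq xu; have yu' := arc_neq yu; have uv' := arc_neq uv.
have vx' := arc_neq vx; have vy' := arc_neq vy.
have [c_yu _] : col y u = col u v /\ col u v = col v y by apply: C3 => //; distinct.
have [_ c_vx] : col x u = col u v /\ col u v = col v x by apply: C3 => //; distinct.
apply: (no_mono_path_yx (q := [:: u; v; x]) (c := col u v)) => //.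
  by split; [rewrite /= yu uv vx | distinct |].
by rewrite /= c_yu -c_vx !eqxx.
Qed.

(* No path u->v->w from an out-vertex through a vertex v of the part of x,
   other than x and y, to an in-vertex: it would close two 4-cycles making
   the path y u v w x monochromatic. *)
Lemma out_mid_in_no_path u v w :
  out_vertex u -> in_vertex w -> v != x -> v != y -> arc u v -> ~~ arc v w.
Proof.
case/andP=> xu yu /andP[wx wy] vx vy uv; apply/negP => vw.
have xu' := arc_neq xu; have yu' := arc_neq yu; have uv' := arc_neq uv.
have vw' := arc_neq vw; have wx' := arc_neq wx; have wy' := arc_neq wy.
have uw : u != w by apply: contraNneq (no_path2_xy w) => E; subst w; rewrite xu wy.
have [c_yu c_uv _] : [/\ col y u = col u v, col u v = col v w
                      & col v w = col w y] by apply: C4 => //; distinct.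
have [_ _ c_wx] : [/\ col x u = col u v, col u v = col v w
                   & col v w = col w x] by apply: C4 => //; distinct.
apply: (no_mono_path_yx (q := [:: u; v; w; x]) (c := col u v)) => //.
  by split; [rewrite /= yu uv vw wx | distinct |].
by rewrite /= c_yu -c_wx -c_uv !eqxx.
Qed.

Definition safe v :=
  out_vertex v || [&& part v == part x, v != x, v != y
                    & [exists u, out_vertex u && arc u v]].

Lemma safe_neq_y v : safe v -> v != y.
Proof. by case/orP=> [/andP[_ /arc_neq]|/and4P[]]; rewrite // eq_sym. Qed.

Lemma safe_step v w : safe v -> arc v w -> safe w.
Proof.
case/orP=> [out_v | /and4P[/eqP vx vx' vy' /existsP[u /andP[out_u uv]]]] vw.
  have [wx | wx] := eqVneq (part w) (part x).
    case/andP: out_v => xv yv.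
    have w_x : w != x by apply: contraNneq (no_path2_yx v) => E; rewrite yv -E.
    have w_y : w != y by apply: contraNneq (no_path2_xy v) => E; rewrite xv -E.
    apply/orP; right; rewrite wx eqxx w_x w_y /=.
    by apply/existsP; exists v; rewrite /out_vertex xv yv.
  case/orP: (out_or_in wx) => [out_w | in_w]; first by rewrite /safe out_w.
  by case/negP: (out_in_no_arc out_v in_w).
have wx : part w != part x by rewrite -vx eq_sym; apply: arc_parts.
case/orP: (out_or_in wx) => [out_w | in_w]; first by rewrite /safe out_w.
by case/negP: (out_mid_in_no_path out_u in_w vx' vy' uv).
Qed.

Lemma safe_path_not_to_y u s : safe u -> path arc u s -> last u s != y.
Proof.
elim: s u => [|w s IH] u safe_u /= => [_ | /andP[uw ws]]; first exact: safe_neq_y.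
exact: IH (safe_step safe_u uw) ws.
Qed.

(* So, when d(x,y) > 2 and no path y->x uses at most two colors, there is
   no path from x to y at all: its second vertex would be an out-vertex. *)
Lemma no_path_xy p : ~ dipath arc x p y.
Proof.
case: p => [[_ _ /eqP]|v s [/= /andP[xv vs] _ last_y]]; first by rewrite (negPf neq_xy).
have vx : part v != part x by rewrite eq_sym; apply: arc_parts.
case/orP: (out_or_in vx) => [out_v | /andP[_ vy]].
  have safe_v : safe v by rewrite /safe out_v.
  by move: (safe_path_not_to_y safe_v vs); rewrite /= last_y eqxx.
by case/negP: (no_path2_xy v); rewrite xv vy.
Qed.

End FarPair.

Theorem mainTheorem4 (V : finType) (r m : nat) (arc : rel V) (part : V -> 'I_r)
  (col : V -> V -> nat) :
  3 <= r ->
  semicomplete_multipartite arc part ->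
  m_colored m arc col ->
  C3_mono arc col ->
  C4_mono arc col ->
  forall x y : V, x != y ->
  (exists p : seq V, dipath arc x p y /\ ncolors col x p = 2) ->
  ~ (exists q : seq V, dipath arc y q x /\ 1 <= ncolors col y q <= 2) ->
  dist_le arc x y 2.
Proof.
move=> _ [_ arc_parts arc_between] _ C3 C4 x y neq_xy [p [xpy _]] no_back.
apply: NNPP => far.
exact: (no_path_xy arc_parts arc_between C3 C4 neq_xy far no_back xpy).
Qed.
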